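(* A risk-sharing rule $\boldsymbol{C}$ on $\chi^n$ is the uniform RS rule if and only if it satisfies the reshuffling property and has strongly aggregate contributions.
   Context: Fix a probability space $(\Omega,\mathcal{F},\mathbb{P})$ and an integer $n\ge 1$. Let $\chi$ be a convex cone of non-negative random variables on this space (closed under addition and under multiplication by positive scalars) with $0\in\chi$. All equalities between random variables are understood almost surely. A pool is a vector $\boldsymbol{X}=(X_1,\ldots,X_n)\in\chi^n$, with aggregate loss $S_{\boldsymbol{X}}=\sum_{i=1}^n X_i$. A risk-sharing (RS) rule is a mapping $\boldsymbol{C}$ assigning to every pool $\boldsymbol{X}\in\chi^n$ a vector $\boldsymbol{C}[\boldsymbol{X}]=(C_1[\boldsymbol{X}],\ldots,C_n[\boldsymbol{X}])$ of real-valued random variables satisfying $\sum_{i=1}^n C_i[\boldsymbol{X}]=S_{\boldsymbol{X}}$. The uniform RS rule is given by $C_i[\boldsymbol{X}]=S_{\boldsymbol{X}}/n$ for all $i$ and all pools. For a permutation $\pi$ of $\{1,\ldots,n\}$, $\boldsymbol{X}^\pi=(X_{\pi(1)},\ldots,X_{\pi(n)})$. Reshuffling property: $C_i[\boldsymbol{X}^\pi]=C_{\pi(i)}[\boldsymbol{X}]$ for all pools $\boldsymbol{X}$, permutations $\pi$ and indices $i$. Strongly aggregate contributions: there exists a single function $\mathbf{h}=(h_1,\ldots,h_n):\mathbb{R}\to\mathbb{R}^n$ (the same for all pools) such that $C_i[\boldsymbol{X}]=h_i(S_{\boldsymbol{X}})$ for every pool $\boldsymbol{X}\in\chi^n$ and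 every $i$. *)

From HB Require Import structures.
From mathcomp Require Import all_boot all_order all_algebra all_fingroup.
From mathcomp Require Import all_classical all_reals all_analysis.
Set Implicit Arguments. Unset Strict Implicit. Unset Printing Implicit Defensive.
Import Order.TTheory GRing.Theory Num.Theory.
Local Open Scope ring_scope.
Local Open Scope classical_set_scope.

Section RiskSharing.
Context {d : measure_display} {T : measurableType d} {R : realType}.
Variable (P : probability T R).

Definition as_eq (X Y : T -> R) : Prop := {ae P, forall w, X w = Y w}.

Definition rv_cone (chi : set (T -> R)) : Prop :=
  [/\ (forall X, chi X -> measurable_fun setT X /\ (forall w, 0 <= X w)),
      chi (fun _ => 0),
      (forall X Y, chi X -> chi Y -> chi (X \+ Y)) &
      (forall (a : R) X, 0 < a -> chi X -> chi (fun w => a * X w))].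

Variable n : nat.

Definition is_pool (chi : set (T -> R)) (X : 'I_n -> T -> R) : Prop :=
  forall i, chi (X i).

Definition aggregate (X : 'I_n -> T -> R) : T -> R :=
  fun w => \sum_(i < n) X i w.

Definition RS_rule (chi : set (T -> R))
    (C : ('I_n -> T -> R) -> 'I_n -> T -> R) : Prop :=
  forall X, is_pool chi X ->
    (forall i, measurable_fun setT (C X i)) /\
    as_eq (fun w => \sum_(i < n) C X i w) (aggregate X).

Definition uniform_rule (chi : set (T -> R))
    (C : ('I_n -> T -> R) -> 'I_n -> T -> R) : Prop :=
  forall X, is_pool chi X -> forall i,
    as_eq (C X i) (fun w => aggregate X w / n%:R).

Definition reshuffle (X : 'I_n -> T -> R) (pi : {perm 'I_n}) : 'I_n -> T -> R :=
  fun i => X (pi i).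

Definition reshuffling (chi : set (T -> R))
    (C : ('I_n -> T -> R) -> 'I_n -> T -> R) : Prop :=
  forall X, is_pool chi X -> forall (pi : {perm 'I_n}) i,
    as_eq (C (reshuffle X pi) i) (C X (pi i)).

Definition strongly_aggregate (chi : set (T -> R))
    (C : ('I_n -> T -> R) -> 'I_n -> T -> R) : Prop :=
  exists h : 'I_n -> R -> R,
    forall X, is_pool chi X -> forall i,
      as_eq (C X i) (fun w => h i (aggregate X w)).

End RiskSharing.

From HB Require Import structures.
From mathcomp Require Import all_boot all_order all_algebra all_fingroup.
From mathcomp Require Import all_classical all_reals all_analysis.
Set Implicit Arguments. Unset Strict Implicit. Unset Printing Implicit Defensive.
Import Order.TTheory GRing.Theory Num.Theory.
Local Open Scope ring_scope.

(* The uniform rule only depends on the aggregate loss, which is invariant under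
   reshuffling. Conversely, reshuffling a pool by the transposition (i j) keeps
   its aggregate loss S, so by reshuffling and strong aggregation
   C_j[X] = C_i[X^(i j)] = h_i(S) = C_i[X] almost surely: all contributions are
   equal, and since they add up to S each of them is S/n. *)

Lemma summand_eq_mean (F : numFieldType) (n : nat) (c : 'I_n -> F) (a s : F) :
  (0 < n)%N -> (forall j, c j = a) -> \sum_(j < n) c j = s -> a = s / n%:R.
Proof.
move=> n_gt0 c_const <-; under eq_bigr do rewrite c_const.
by rewrite sumr_const card_ord -[a *+ n]mulr_natr mulfK // pnatr_eq0 -lt0n.
Qed.

Section UniformRule.
Context {d : measure_display} {T : measurableType d} {R : realType}.
Variables (P : probability T R) (n : nat) (chi : set (T -> R)).
Implicit Types (X : 'I_n -> T -> R) (C : ('I_n -> T -> R) -> 'I_n -> T -> R).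

Definition equal_contributions C : Prop :=
  forall X, is_pool chi X -> forall i, {ae P, forall w j, C X j w = C X i w}.

Lemma is_pool_reshuffle X (pi : {perm 'I_n}) :
  is_pool chi X -> is_pool chi (reshuffle X pi).
Proof. by move=> poolX j; apply: poolX. Qed.

Lemma aggregate_reshuffle X (pi : {perm 'I_n}) :
  aggregate (reshuffle X pi) = aggregate X.
Proof. by apply/funext => w; rewrite [RHS](reindex_inj (@perm_inj _ pi)). Qed.

Lemma uniform_reshuffling C : uniform_rule P chi C -> reshuffling P chi C.
Proof.
move=> unifC X poolX pi i.
have := unifC _ (is_pool_reshuffle pi poolX) i; have := unifC _ poolX (pi i).
by apply: filterS2 => w -> ->; rewrite aggregate_reshuffle.
Qed.

Lemma uniform_strongly_aggregate C :
  uniform_rule P chi C -> strongly_aggregate P chi C.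
Proof. by move=> unifC; exists (fun _ s => s / n%:R). Qed.

Lemma reshuffling_aggregate_equal_contributions C :
  reshuffling P chi C -> strongly_aggregate P chi C -> equal_contributions C.
Proof.
move=> reshC [h aggC] X poolX i; apply: filter_forall => j.
have poolXij := is_pool_reshuffle (tperm i j) poolX.
have := reshC X poolX (tperm i j) i; rewrite tpermL.
have := aggC _ poolXij i; rewrite aggregate_reshuffle.
have := aggC X poolX i.
by apply: filterS3 => w -> ->.
Qed.

Lemma equal_contributions_uniform C : (0 < n)%N ->
  RS_rule P chi C -> equal_contributions C -> uniform_rule P chi C.
Proof.
move=> n_gt0 rsC eqC X poolX i.
have := (rsC X poolX).2; have := eqC X poolX i.
by apply: filterS2 => w /summand_eq_mean; apply.
Qed.

End UniformRule.

Theorem theorem2 (d : measure_display) (T : measurableType d) (R : realType)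
    (P : probability T R) (n : nat) (n_ge1 : (0 < n)%N)
    (chi : set (T -> R)) (chi_cone : rv_cone chi)
    (C : ('I_n -> T -> R) -> 'I_n -> T -> R) (C_RS : RS_rule P chi C) :
  uniform_rule P chi C <-> (reshuffling P chi C /\ strongly_aggregate P chi C).
Proof.
split=> [unifC | [reshC aggC]].
  by split; [apply: uniform_reshuffling | apply: uniform_strongly_aggregate].
apply: (equal_contributions_uniform n_ge1 C_RS).
exact: reshuffling_aggregate_equal_contributions.
Qed.
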